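(* Let $X$ and $Y$ be words in the free $\mathbb{C}$-algebra $\mathcal{A}$ on $L,R$. Then $X\sim Y$ if and only if there is a sequence of swaps between $X$ and $Y$.
   Context: $\mathcal{A}$ is the free associative $\mathbb{C}$-algebra on noncommuting generators $L,R$; words are finite products of these letters (including the empty word). A word is balanced if it contains equally many $L$'s and $R$'s. Let $S=\{FG-GF : F,G \text{ nonempty balanced words}\}$ and $\mathcal{J}$ the two-sided ideal generated by $S$; for words $X,Y$, $X\sim Y$ means $X-Y\in\mathcal{J}$. If $F,G$ are nonempty balanced words and $W_1,W_2$ are words, the words $W_1FGW_2$ and $W_1GFW_2$ are said to be related by a swap (of type $(F,G)$, which is the same as type $(G,F)$). A sequence of swaps between $X$ and $Y$ is a finite sequence of words $Z_1=X,Z_2,\dots,Z_k=Y$ such that $Z_i$ and $Z_{i+1}$ are related by a swap for each $1\le i\le k-1$. *)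

From HB Require Import structures.
From mathcomp Require Import all_boot all_order all_algebra.
From mathcomp Require Import complex.
From mathcomp Require Import Rstruct.
From Stdlib Require Rdefinitions.
Set Implicit Arguments. Unset Strict Implicit. Unset Printing Implicit Defensive.
Import Order.TTheory GRing.Theory Num.Theory.
Local Open Scope ring_scope.

Definition CC : fieldType := (Rdefinitions.R)[i].

Definition letter := bool.
Definition lL : letter := true.
Definition lR : letter := false.
Definition word := seq letter.

Definition balanced (w : word) : bool := count (pred1 lL) w == count (pred1 lR) w.

(** The free associative C-algebra A on L, R: elements are C-valued functions
    on words with finite support (equivalently, support of bounded length,
    since there are finitely many words of each length). *)
Definition fun_word := word -> CC.
Definition inA (f : fun_word) : Prop :=
  exists n : nat, forall w : word, (n <= size w)%N -> f w = 0.

Definition addA (f g : fun_word) : fun_word := fun w => f w + g w.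
Definition oppA (f : fun_word) : fun_word := fun w => - f w.
Definition zeroA : fun_word := fun _ => 0.
Definition mulA (f g : fun_word) : fun_word :=
  fun w => \sum_(i < (size w).+1) f (take i w) * g (drop i w).

Definition wordA (u : word) : fun_word := fun w => if w == u then 1 else 0.

Definition is_two_sided_ideal (I : fun_word -> Prop) : Prop :=
  [/\ (forall x, I x -> inA x),
      I zeroA,
      (forall x y, I x -> I y -> I (addA x y)) &
      (forall a x b, inA a -> inA b -> I x -> I (mulA (mulA a x) b))].

Definition inS (x : fun_word) : Prop :=
  exists F G : word,
    [/\ F != [::], G != [::], balanced F, balanced G &
        x = addA (wordA (F ++ G)) (oppA (wordA (G ++ F)))].

Definition inJ (x : fun_word) : Prop :=
  forall I, is_two_sided_ideal I -> (forall s, inS s -> I s) -> I x.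

Definition simJ (X Y : word) : Prop := inJ (addA (wordA X) (oppA (wordA Y))).

Definition swap_related (X Y : word) : Prop :=
  exists W1 W2 F G : word,
    [/\ F != [::], G != [::], balanced F, balanced G &
        X = W1 ++ F ++ G ++ W2 /\ Y = W1 ++ G ++ F ++ W2].

Definition swap_sequence (X Y : word) : Prop :=
  exists (k : nat) (Z : nat -> word),
    [/\ Z 0%N = X, Z k = Y & forall i, (i < k)%N -> swap_related (Z i) (Z i.+1)].

(* <-: a swap turns W1 F G W2 into W1 G F W2, and the difference
   W1 (FG - GF) W2 lies in J.
   ->: call f in A swap-null if, for every swap-closed set P of words and
   every length m, the coefficients of f on the words of length m in P sum
   to 0.  Swap-null elements form a two-sided ideal containing S: when P is
   swap-closed, so are {v | uv in P} and {u | uv in P}, which is what the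
   product formula needs.  Hence X - Y is swap-null; for P the set of words
   reachable from X by swaps the sum is 1 - [Y in P], so Y is reachable. *)
From Stdlib Require Import FunctionalExtensionality ClassicalEpsilon.
From mathcomp Require Import all_boot all_order all_algebra.
From mathcomp Require Import zify.
Set Implicit Arguments. Unset Strict Implicit. Unset Printing Implicit Defensive.
Import GRing.Theory.
Local Open Scope ring_scope.

Lemma swap_sequence_refl X : swap_sequence X X.
Proof. by exists 0%N, (fun _ => X); split => // i; rewrite ltn0. Qed.

Lemma swap_sequence_rcons X Y W :
  swap_sequence X Y -> swap_related Y W -> swap_sequence X W.
Proof.
move=> [k [Z [Z0 Zk steps]]] YW.
exists k.+1, (fun i => if (i <= k)%N then Z i else W); split => /=.
- by rewrite Z0.
- by rewrite ltnn.
- move=> i; rewrite ltnS leq_eqVlt => /predU1P[-> | ltik].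
    by rewrite eqxx ltnn Zk.
  by rewrite ltik orbT; exact: steps.
Qed.

Lemma swap_related_sym X Y : swap_related X Y -> swap_related Y X.
Proof. by move=> [W1 [W2 [F [G [nF nG bF bG [-> ->]]]]]]; exists W1, W2, G, F. Qed.

Lemma swap_related_size X Y : swap_related X Y -> size X = size Y.
Proof.
move=> [W1 [W2 [F [G [_ _ _ _ [-> ->]]]]]].
by rewrite !size_cat; congr (_ + _); exact: addnCA.
Qed.

Lemma swap_related_catl u v v' :
  swap_related v v' -> swap_related (u ++ v) (u ++ v').
Proof.
move=> [W1 [W2 [F [G [nF nG bF bG [-> ->]]]]]].
by exists (u ++ W1), W2, F, G; split => //; rewrite -!catA.
Qed.

Lemma swap_related_catr v v' s :
  swap_related v v' -> swap_related (v ++ s) (v' ++ s).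
Proof.
move=> [W1 [W2 [F [G [nF nG bF bG [-> ->]]]]]].
by exists W1, (W2 ++ s), F, G; split => //; rewrite -!catA.
Qed.

Fixpoint words_of_size (n : nat) : seq word :=
  if n is m.+1 then [seq lL :: w | w <- words_of_size m] ++
                    [seq lR :: w | w <- words_of_size m]
  else [:: [::]].

Lemma mem_words_of_size n w : (w \in words_of_size n) = (size w == n).
Proof.
elim: n w => [|n IHn] [|b w] //=; rewrite mem_cat.
- by apply/negbTE; rewrite negb_or; apply/andP; split; apply/mapP => -[].
- rewrite eqSS -IHn; apply/orP/idP => [[] /mapP[v vn [_ ->]] // | wn].
  by case: b; [left | right]; apply: map_f.
Qed.

Lemma uniq_words_of_size n : uniq (words_of_size n).
Proof.
elim: n => //= n IHn.
rewrite cat_uniq !map_inj_uniq; try by move=> v w [].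
rewrite IHn andbT /=; apply/hasPn => _ /mapP[w _ ->].
by apply/mapP => -[].
Qed.

Lemma big_words_of_size_cat (V : nmodType) i j (F : word -> V) :
  \sum_(w <- words_of_size (i + j)) F w =
  \sum_(u <- words_of_size i) \sum_(v <- words_of_size j) F (u ++ v).
Proof.
elim: i F => [|i IHi] F; first by rewrite big_seq1.
by rewrite addSn /= !big_cat !big_map !IHi.
Qed.

Lemma sum_wordA (s : seq word) (P : pred word) x : uniq s ->
  \sum_(w <- s | P w) wordA x w = ((x \in s) && P x)%:R.
Proof.
elim: s => [|v s IHs] /=; first by rewrite big_nil.
move=> /andP[v_notin s_uniq]; rewrite big_cons IHs // inE /wordA.
have [<- | neq] := eqVneq v x; last by case: (P v); rewrite ?add0r.
by rewrite (negbTE v_notin) /=; case: (P v); rewrite ?addr0.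
Qed.

Lemma sum_wordA_sub (P : pred word) m X Y :
  \sum_(w <- words_of_size m | P w) addA (wordA X) (oppA (wordA Y)) w =
  ((size X == m) && P X)%:R - ((size Y == m) && P Y)%:R.
Proof.
rewrite /addA /oppA big_split sumrN /= !sum_wordA ?uniq_words_of_size //.
by rewrite !mem_words_of_size.
Qed.

Lemma inA_wordA u : inA (wordA u).
Proof.
exists (size u).+1 => w; rewrite /wordA; case: eqP => // ->.
by rewrite ltnn.
Qed.

Lemma inA_add f g : inA f -> inA g -> inA (addA f g).
Proof.
move=> [m fm] [n gn]; exists (maxn m n) => w; rewrite geq_max => /andP[wm wn].
by rewrite /addA fm ?gn ?addr0.
Qed.

Lemma inA_opp f : inA f -> inA (oppA f).
Proof. by move=> [n fn]; exists n => w wn; rewrite /oppA fn ?oppr0. Qed.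

Lemma inA_mul f g : inA f -> inA g -> inA (mulA f g).
Proof.
move=> [m fm] [n gn]; exists (m + n)%N => w w_ge.
rewrite /mulA big1 // => -[i /= lti] _.
have [mi | im] := leqP m i.
  by rewrite fm ?mul0r // size_takel // -ltnS.
by rewrite gn ?mulr0 // size_drop; lia.
Qed.

Lemma mulA_addr f g h : mulA f (addA g h) = addA (mulA f g) (mulA f h).
Proof.
by apply: functional_extensionality => w; rewrite /mulA /addA -big_split;
  apply: eq_bigr => i _; rewrite mulrDr.
Qed.

Lemma mulA_addl f g h : mulA (addA f g) h = addA (mulA f h) (mulA g h).
Proof.
by apply: functional_extensionality => w; rewrite /mulA /addA -big_split;
  apply: eq_bigr => i _; rewrite mulrDl.
Qed.

Lemma mulA_oppr f g : mulA f (oppA g) = oppA (mulA f g).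
Proof.
by apply: functional_extensionality => w; rewrite /mulA /oppA -sumrN;
  apply: eq_bigr => i _; rewrite mulrN.
Qed.

Lemma mulA_oppl f g : mulA (oppA f) g = oppA (mulA f g).
Proof.
by apply: functional_extensionality => w; rewrite /mulA /oppA -sumrN;
  apply: eq_bigr => i _; rewrite mulNr.
Qed.

Lemma mulA_wordA u v : mulA (wordA u) (wordA v) = wordA (u ++ v).
Proof.
apply: functional_extensionality => w; rewrite /mulA /wordA.
have [-> | neq] := eqVneq w (u ++ v).
  have ltu : (size u < (size (u ++ v)).+1)%N by rewrite ltnS size_cat leq_addr.
  rewrite (bigD1 (Ordinal ltu)) // take_size_cat // drop_size_cat // !eqxx.
  rewrite mulr1 big1; first exact: addr0.
  move=> i /eqP neq_i.
  case: eqP => [take_i | _]; last by rewrite mul0r.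
  case: neq_i; apply: val_inj => /=.
  by rewrite -(size_takel (ltnSE (ltn_ord i))) take_i.
rewrite big1 // => i _.
case: eqP => [take_i | _]; last by rewrite mul0r.
case: eqP => [drop_i | _]; last by rewrite mulr0.
by rewrite -(cat_take_drop i w) take_i drop_i eqxx in neq.
Qed.

Lemma inJ_zero : inJ zeroA.
Proof. by move=> I [_ I0 _ _]. Qed.

Lemma inJ_add f g : inJ f -> inJ g -> inJ (addA f g).
Proof.
move=> Jf Jg I idealI IS; have [_ _ Iadd _] := idealI.
by apply: Iadd; [apply: Jf | apply: Jg].
Qed.

Lemma simJ_refl X : simJ X X.
Proof.
rewrite /simJ (_ : addA _ _ = zeroA); first exact: inJ_zero.
by apply: functional_extensionality => w; rewrite /addA /oppA subrr.
Qed.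

Lemma simJ_trans X Y Z : simJ X Y -> simJ Y Z -> simJ X Z.
Proof.
move=> XY YZ; have := inJ_add XY YZ; congr inJ.
by apply: functional_extensionality => w; rewrite /addA /oppA addrA subrK.
Qed.

Lemma simJ_of_swap_related X Y : swap_related X Y -> simJ X Y.
Proof.
move=> [W1 [W2 [F [G [nF nG bF bG [-> ->]]]]]] I [_ _ _ Imul] IS.
have := Imul (wordA W1) _ (wordA W2) (inA_wordA _) (inA_wordA _)
  (IS _ (ex_intro _ F (ex_intro _ G (And5 nF nG bF bG erefl)))).
by rewrite mulA_addr mulA_oppr !mulA_wordA mulA_addl mulA_oppl !mulA_wordA -!catA.
Qed.

Lemma simJ_of_swap_sequence X Y : swap_sequence X Y -> simJ X Y.
Proof.
move=> [k [Z [<- <- steps]]].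
suff reach i : (i <= k)%N -> simJ (Z 0%N) (Z i) by exact: reach.
elim: i => [|i IHi] lei; first exact: simJ_refl.
exact: simJ_trans (IHi (ltnW lei)) (simJ_of_swap_related (steps _ lei)).
Qed.

Definition swap_closed (P : pred word) : Prop :=
  forall v w, swap_related v w -> P v -> P w.

Definition swap_null (f : fun_word) : Prop :=
  forall (P : pred word) m, swap_closed P -> \sum_(w <- words_of_size m | P w) f w = 0.

Lemma swap_null_wordA_sub X Y :
  swap_related X Y -> swap_null (addA (wordA X) (oppA (wordA Y))).
Proof.
move=> XY P m closedP; rewrite sum_wordA_sub (swap_related_size XY).
have -> : P Y = P X by apply/idP/idP; apply: closedP => //; exact: swap_related_sym.
by rewrite subrr.
Qed.

Lemma sum_mulA (f g : fun_word) (P : pred word) m :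
  \sum_(w <- words_of_size m | P w) mulA f g w =
  \sum_(i < m.+1) \sum_(u <- words_of_size i)
     \sum_(v <- words_of_size (m - i) | P (u ++ v)) f u * g v.
Proof.
rewrite big_seq_cond (eq_bigr (fun w => \sum_(i < m.+1)
  f (take i w) * g (drop i w))); last first.
  by move=> w /andP[]; rewrite mem_words_of_size /mulA => /eqP->.
rewrite -big_seq_cond exchange_big; apply: eq_bigr => -[i lt_im] _.
rewrite big_mkcond -{1}(subnKC (ltnSE lt_im)) big_words_of_size_cat.
rewrite big_seq [RHS]big_seq; apply: eq_bigr => u; rewrite mem_words_of_size.
move=> /eqP size_u; rewrite [RHS]big_mkcond; apply: eq_bigr => v _.
by rewrite (take_size_cat _ size_u) (drop_size_cat _ size_u).
Qed.

Lemma swap_null_mull a y : swap_null y -> swap_null (mulA a y).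
Proof.
move=> null_y P m closedP; rewrite sum_mulA big1 // => i _.
rewrite big1 // => u _; rewrite -mulr_sumr null_y ?mulr0 //.
by move=> v w vw; apply: closedP; apply: swap_related_catl.
Qed.

Lemma swap_null_mulr y b : swap_null y -> swap_null (mulA y b).
Proof.
move=> null_y P m closedP; rewrite sum_mulA big1 // => i _.
under eq_bigr do rewrite big_mkcond.
rewrite exchange_big big1 // => v _; rewrite -big_mkcond -mulr_suml null_y ?mul0r //.
by move=> u w uw; apply: closedP; apply: swap_related_catr.
Qed.

Definition swap_null_ideal (f : fun_word) : Prop := inA f /\ swap_null f.

Lemma swap_null_ideal_two_sided : is_two_sided_ideal swap_null_ideal.
Proof.
split.
- by move=> f [].
- by split=> [|P m _]; [exists 0%N | rewrite big1].
- move=> f g [Af null_f] [Ag null_g]; split; first exact: inA_add.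
  by move=> P m closedP; rewrite /addA big_split /= null_f ?null_g ?addr0.
- move=> a x b Aa Ab [Ax null_x]; split; first by do 2?apply: inA_mul.
  by apply/swap_null_mulr/swap_null_mull.
Qed.

Lemma swap_null_ideal_of_inS s : inS s -> swap_null_ideal s.
Proof.
move=> [F [G [nF nG bF bG ->]]]; split.
  exact/inA_add/inA_opp/inA_wordA/inA_wordA.
by apply: swap_null_wordA_sub; exists [::], [::], F, G; rewrite !cats0.
Qed.

Lemma swap_sequence_of_simJ X Y : simJ X Y -> swap_sequence X Y.
Proof.
move=> XY; pose reachable w : bool := excluded_middle_informative (swap_sequence X w).
have reachableP w : reflect (swap_sequence X w) (reachable w).
  by rewrite /reachable; case: excluded_middle_informative => ?; constructor.
have closed_reachable : swap_closed reachable.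
  by move=> v w vw /reachableP Xv; apply/reachableP/(swap_sequence_rcons Xv).
have [_ null_XY] := XY _ swap_null_ideal_two_sided swap_null_ideal_of_inS.
have := null_XY reachable (size X) closed_reachable.
rewrite sum_wordA_sub eqxx (introT (reachableP X) (swap_sequence_refl X)).
have [/reachableP // | _] := boolP (reachable Y).
by rewrite andbF subr0 => /(@eqP CC); rewrite oner_eq0.
Qed.

Theorem proposition3p2 (X Y : word) : simJ X Y <-> swap_sequence X Y.
Proof.
split; [exact: swap_sequence_of_simJ | exact: simJ_of_swap_sequence].
Qed.
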